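(* Let $\mathcal{P}=\langle V_{\mathcal{P}},F_{\mathcal{P}}\rangle$ be a declassification policy, with public view $\Delta^{\mathcal{P}}_{P},\Gamma^{\mathcal{P}}_{P}$ (defined in the context). Let $e$ be a term containing no type variables (i.e. $\delta(e)$ is syntactically equal to $e$ for every type substitution $\delta$), and suppose $\Delta^{\mathcal{P}}_{P},\Gamma^{\mathcal{P}}_{P}\vdash e:\tau$. Then $e$ is $\mathrm{TRNI}(\mathcal{P},\tau)$, i.e. $\Gamma^{\mathcal{P}}_{C}\vdash e$ (e is typable in the confidential view), $\Delta^{\mathcal{P}}_{P}\vdash\tau$, and for all term substitutions $\langle\gamma_1,\gamma_2\rangle\in I[\mathcal{P}]$ we have $\langle\gamma_1(e),\gamma_2(e)\rangle\in I[\tau]^{ev}$.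
   Context: Language (simply typed call-by-value lambda calculus with type variables). Types $\tau::=\mathbf{int}\mid\alpha\mid\tau_1\times\tau_2\mid\tau_1\to\tau_2$; values $v::=n\mid\langle v,v\rangle\mid\lambda x:\tau.e$ ($n$ integer literals); terms $e::=x\mid v\mid\langle e,e\rangle\mid\pi_i e\mid e_1e_2$; the language is assumed to include primitive arithmetic operators $e\oplus e$ on $\mathbf{int}$ whose applications to well-typed arguments terminate. Evaluation contexts $E::=[.]\mid\langle E,e\rangle\mid\langle v,E\rangle\mid\pi_iE\mid E\,e\mid v\,E$; reduction: $\pi_i\langle v_1,v_2\rangle\to v_i$, $(\lambda x:\tau.e)v\to e[x\mapsto v]$, and $E[e]\to E[e']$ if $e\to e'$; $\to^*$ is the reflexive transitive closure. Typing judgments $\Delta,\Gamma\vdash e:\tau$ ($\Delta$ a set of type variables, $\Gamma$ a map from term variables to types well-formed in $\Delta$) are the standard ones for int literals, variables, pairs, projections, abstraction and application. $\Gamma\vdash e$ means $\Gamma\vdash e:\tau$ for some $\tau$; $\Delta\vdash\tau$ means all type variables of $\tau$ are in $\Delta$. Policy: $\mathcal{P}=\langle V_{\mathcal{P}},F_{\mathcal{P}}\rangle$ where $V_{\mathcal{P}}$ is a finite set of variables (confidential inputs) and $F_{\mathcal{P}}$ is a partial map from $V_{\mathcal{P}}$ to declassification functions $f=\lambda x:\mathbf{int}.e$, each a closed term of type $\mathbf{int}\to\tau_f$ for a closed type $\tau_f$. Let $V_\top=V_{\mathcal{P}}\setminus\mathrm{dom}(F_{\mathcal{P}})$. Confidential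 view: $\Gamma^{\mathcal{P}}_C=\{x:\mathbf{int}\mid x\in V_\top\}\cup\bigcup_{x\in\mathrm{dom}F_{\mathcal{P}},F_{\mathcal{P}}(x)=f}\{x:\mathbf{int},\,x_f:\mathbf{int}\to\tau_f\}$. Public view: $\Delta^{\mathcal{P}}_P=\{\alpha_x\mid x\in V_\top\}\cup\{\alpha_f\mid F_{\mathcal{P}}(x)=f\}$ and $\Gamma^{\mathcal{P}}_P=\{x:\alpha_x\mid x\in V_\top\}\cup\{x:\alpha_f,\,x_f:\alpha_f\to\tau_f\mid F_{\mathcal{P}}(x)=f\}$. All variables $x_f,\alpha_x,\alpha_f$ are fresh and pairwise distinct as appropriate. Let $\delta_{\mathcal{P}}$ be the type substitution mapping every $\alpha_x$ and $\alpha_f$ in $\Delta^{\mathcal{P}}_P$ to $\mathbf{int}$. Indistinguishability, for $\tau$ with $\Delta^{\mathcal{P}}_P\vdash\tau$, defined inductively: $\langle n,n\rangle\in I[\mathbf{int}]$; $\langle\langle v_1,v_2\rangle,\langle v_1',v_2'\rangle\rangle\in I[\tau_1\times\tau_2]$ if $\langle v_1,v_1'\rangle\in I[\tau_1]$ and $\langle v_2,v_2'\rangle\in I[\tau_2]$; $\langle v_1,v_2\rangle\in I[\tau_1\to\tau_2]$ if for all $\langle v_1',v_2'\rangle\in I[\tau_1]$, $\langle v_1v_1',v_2v_2'\rangle\in I[\tau_2]^{ev}$; $\langle v_1,v_2\rangle\in I[\alpha_x]$ if $\vdash v_1,v_2:\mathbf{int}$; $\langle v_1,v_2\rangle\in I[\alpha_f]$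 if $\vdash v_1,v_2:\mathbf{int}$ and $\langle f\,v_1,f\,v_2\rangle\in I[\tau_f]^{ev}$; $\langle e_1,e_2\rangle\in I[\tau]^{ev}$ if $\vdash e_1,e_2:\delta_{\mathcal{P}}(\tau)$, $e_1\to^*v_1$, $e_2\to^*v_2$ and $\langle v_1,v_2\rangle\in I[\tau]$. A term substitution $\gamma$ (finite map from term variables to closed values) respects $\Gamma$ if $\mathrm{dom}\gamma=\mathrm{dom}\Gamma$ and $\vdash\gamma(x):\Gamma(x)$ for all $x$. $\langle\gamma_1,\gamma_2\rangle\in I[\mathcal{P}]$ iff both $\gamma_i$ respect $\delta_{\mathcal{P}}(\Gamma^{\mathcal{P}}_P)$ (the context $\Gamma^{\mathcal{P}}_P$ with $\delta_{\mathcal{P}}$ applied to each type), $\gamma_1(x_f)=\gamma_2(x_f)=f$ for every $x_f\in\mathrm{dom}\Gamma^{\mathcal{P}}_P$, and $\langle\gamma_1(x),\gamma_2(x)\rangle\in I[\Gamma^{\mathcal{P}}_P(x)]$ for every other $x\in\mathrm{dom}\Gamma^{\mathcal{P}}_P$. *)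

From Stdlib Require Import ZArith List Bool Arith.
Import ListNotations.

Definition var := nat.
Definition tyvar := nat.

Inductive ty : Type :=
| TInt : ty
| TVar : tyvar -> ty
| TProd : ty -> ty -> ty
| TArr : ty -> ty -> ty.

(* Terms.  [Op o e1 e2] is a primitive arithmetic operator on int
   (total, hence terminating, semantics [o : Z -> Z -> Z]). *)
Inductive tm : Type :=
| Var : var -> tm
| Int : Z -> tm
| Pair : tm -> tm -> tm
| Fst : tm -> tm
| Snd : tm -> tm
| Lam : var -> ty -> tm -> tm
| App : tm -> tm -> tm
| Op : (Z -> Z -> Z) -> tm -> tm -> tm.

Inductive value : tm -> Prop :=
| V_Int n : value (Int n)
| V_Pair v1 v2 : value v1 -> value v2 -> value (Pair v1 v2)
| V_Lam x t e : value (Lam x t e).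

(* e[x |-> v] (only used with closed v, so no capture issues) *)
Fixpoint subst (x : var) (v : tm) (e : tm) : tm :=
  match e with
  | Var y => if Nat.eqb x y then v else Var y
  | Int n => Int n
  | Pair e1 e2 => Pair (subst x v e1) (subst x v e2)
  | Fst e1 => Fst (subst x v e1)
  | Snd e1 => Snd (subst x v e1)
  | Lam y t b => if Nat.eqb x y then Lam y t b else Lam y t (subst x v b)
  | App e1 e2 => App (subst x v e1) (subst x v e2)
  | Op o e1 e2 => Op o (subst x v e1) (subst x v e2)
  end.

(* Small-step reduction; the congruence rules are exactly the
   evaluation contexts E ::= [.] | <E,e> | <v,E> | pi_i E | E e | v E
   (plus the contexts E (+) e | v (+) E for primitive operators). *)
Inductive step : tm -> tm -> Prop :=
| S_Fst v1 v2 : value v1 -> value v2 -> step (Fst (Pair v1 v2)) v1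
| S_Snd v1 v2 : value v1 -> value v2 -> step (Snd (Pair v1 v2)) v2
| S_Beta x t e v : value v -> step (App (Lam x t e) v) (subst x v e)
| S_Op o n1 n2 : step (Op o (Int n1) (Int n2)) (Int (o n1 n2))
| S_PairL e e' e2 : step e e' -> step (Pair e e2) (Pair e' e2)
| S_PairR v e e' : value v -> step e e' -> step (Pair v e) (Pair v e')
| S_FstC e e' : step e e' -> step (Fst e) (Fst e')
| S_SndC e e' : step e e' -> step (Snd e) (Snd e')
| S_AppL e e' e2 : step e e' -> step (App e e2) (App e' e2)
| S_AppR v e e' : value v -> step e e' -> step (App v e) (App v e')
| S_OpL o e e' e2 : step e e' -> step (Op o e e2) (Op o e' e2)
| S_OpR o v e e' : value v -> step e e' -> step (Op o v e) (Op o v e').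

Inductive steps : tm -> tm -> Prop :=
| steps_refl e : steps e e
| steps_step e1 e2 e3 : step e1 e2 -> steps e2 e3 -> steps e1 e3.

Definition tctx := tyvar -> Prop.

Fixpoint wf_ty (D : tctx) (t : ty) : Prop :=
  match t with
  | TInt => True
  | TVar a => D a
  | TProd t1 t2 => wf_ty D t1 /\ wf_ty D t2
  | TArr t1 t2 => wf_ty D t1 /\ wf_ty D t2
  end.

Definition empty_tctx : tctx := fun _ => False.

Definition closed_ty (t : ty) : Prop := wf_ty empty_tctx t.

(* Term contexts Gamma, as (functional) relations var -> ty *)
Definition ctx := var -> ty -> Prop.
Definition empty_ctx : ctx := fun _ _ => False.
Definition ext (G : ctx) (x : var) (t : ty) : ctx :=
  fun y s => (y = x /\ s = t) \/ (y <> x /\ G y s).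

Inductive has_type (D : tctx) : ctx -> tm -> ty -> Prop :=
| T_Int G n : has_type D G (Int n) TInt
| T_Var G x t : G x t -> has_type D G (Var x) t
| T_Pair G e1 e2 t1 t2 :
    has_type D G e1 t1 -> has_type D G e2 t2 -> has_type D G (Pair e1 e2) (TProd t1 t2)
| T_Fst G e t1 t2 : has_type D G e (TProd t1 t2) -> has_type D G (Fst e) t1
| T_Snd G e t1 t2 : has_type D G e (TProd t1 t2) -> has_type D G (Snd e) t2
| T_Lam G x t1 t2 e :
    wf_ty D t1 -> has_type D (ext G x t1) e t2 -> has_type D G (Lam x t1 e) (TArr t1 t2)
| T_App G e1 e2 t1 t2 :
    has_type D G e1 (TArr t1 t2) -> has_type D G e2 t1 -> has_type D G (App e1 e2) t2
| T_Op G o e1 e2 :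
    has_type D G e1 TInt -> has_type D G e2 TInt -> has_type D G (Op o e1 e2) TInt.

Definition typed_closed (e : tm) (t : ty) : Prop := has_type empty_tctx empty_ctx e t.

Definition typable (D : tctx) (G : ctx) (e : tm) : Prop := exists t, has_type D G e t.

Fixpoint ty_subst (d : tyvar -> ty) (t : ty) : ty :=
  match t with
  | TInt => TInt
  | TVar a => d a
  | TProd t1 t2 => TProd (ty_subst d t1) (ty_subst d t2)
  | TArr t1 t2 => TArr (ty_subst d t1) (ty_subst d t2)
  end.

Fixpoint tm_tsubst (d : tyvar -> ty) (e : tm) : tm :=
  match e with
  | Var y => Var y
  | Int n => Int n
  | Pair e1 e2 => Pair (tm_tsubst d e1) (tm_tsubst d e2)
  | Fst e1 => Fst (tm_tsubst d e1)
  | Snd e1 => Snd (tm_tsubst d e1)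
  | Lam y t b => Lam y (ty_subst d t) (tm_tsubst d b)
  | App e1 e2 => App (tm_tsubst d e1) (tm_tsubst d e2)
  | Op o e1 e2 => Op o (tm_tsubst d e1) (tm_tsubst d e2)
  end.

(* Term substitutions gamma: finite maps from variables to closed values *)
Definition tsubst := var -> option tm.

Fixpoint msubst (g : tsubst) (e : tm) : tm :=
  match e with
  | Var y => match g y with Some v => v | None => Var y end
  | Int n => Int n
  | Pair e1 e2 => Pair (msubst g e1) (msubst g e2)
  | Fst e1 => Fst (msubst g e1)
  | Snd e1 => Snd (msubst g e1)
  | Lam y t b =>
      Lam y t (msubst (fun z => if Nat.eqb z y then None else g z) b)
  | App e1 e2 => App (msubst g e1) (msubst g e2)
  | Op o e1 e2 => Op o (msubst g e1) (msubst g e2)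
  end.

Definition respects (g : tsubst) (G : ctx) : Prop :=
  (forall x, g x <> None <-> exists t, G x t) /\
  (forall x v t, g x = Some v -> G x t -> value v /\ typed_closed v t).

(* V_P is a finite set (list) of variables, F_P a partial map
   from V_P to declassification functions f, each paired with its result
   type tau_f.  The fresh names x_f, alpha_x, alpha_f are given by naming
   functions (x_f and alpha_f are indexed by f, as in the paper). *)
Record policy : Type := {
  VP : list var;
  FP : var -> option (tm * ty);
  xname : tm -> var;
  aname_x : var -> tyvar;
  aname_f : tm -> tyvar
}.

Definition in_Vtop (P : policy) (x : var) : Prop := In x (VP P) /\ FP P x = None.

Definition wf_policy (P : policy) : Prop :=
  (forall x p, FP P x = Some p -> In x (VP P)) /\
  (forall x f tf, FP P x = Some (f, tf) ->
     (exists y b, f = Lam y TInt b) /\ typed_closed f (TArr TInt tf) /\ closed_ty tf) /\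
  (forall x f tf, FP P x = Some (f, tf) -> ~ In (xname P f) (VP P)) /\
  (forall x x' f f' tf tf', FP P x = Some (f, tf) -> FP P x' = Some (f', tf') ->
     xname P f = xname P f' -> f = f') /\
  (forall x x', in_Vtop P x -> in_Vtop P x' -> aname_x P x = aname_x P x' -> x = x') /\
  (forall x x' f f' tf tf', FP P x = Some (f, tf) -> FP P x' = Some (f', tf') ->
     aname_f P f = aname_f P f' -> f = f') /\
  (forall x x' f tf, in_Vtop P x -> FP P x' = Some (f, tf) -> aname_x P x <> aname_f P f).

Definition inDeltaP (P : policy) (a : tyvar) : bool :=
  existsb (fun x => match FP P x with
                    | None => Nat.eqb (aname_x P x) a
                    | Some (f, _) => Nat.eqb (aname_f P f) a
                    end) (VP P).

Definition DeltaP (P : policy) : tctx := fun a => inDeltaP P a = true.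

Definition deltaP (P : policy) (a : tyvar) : ty :=
  if inDeltaP P a then TInt else TVar a.

Inductive GammaP (P : policy) : ctx :=
| GP_top x : in_Vtop P x -> GammaP P x (TVar (aname_x P x))
| GP_decl x f tf : FP P x = Some (f, tf) -> GammaP P x (TVar (aname_f P f))
| GP_declf x f tf : FP P x = Some (f, tf) ->
    GammaP P (xname P f) (TArr (TVar (aname_f P f)) tf).

Inductive GammaC (P : policy) : ctx :=
| GC_top x : in_Vtop P x -> GammaC P x TInt
| GC_decl x f tf : FP P x = Some (f, tf) -> GammaC P x TInt
| GC_declf x f tf : FP P x = Some (f, tf) -> GammaC P (xname P f) (TArr TInt tf).

Definition ctx_tsubst (d : tyvar -> ty) (G : ctx) : ctx :=
  fun x s => exists t, G x t /\ s = ty_subst d t.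

Definition Iev_of (P : policy) (R : tm -> tm -> Prop) (t : ty) (e1 e2 : tm) : Prop :=
  typed_closed e1 (ty_subst (deltaP P) t) /\ typed_closed e2 (ty_subst (deltaP P) t) /\
  exists v1 v2, value v1 /\ value v2 /\ steps e1 v1 /\ steps e2 v2 /\ R v1 v2.

Fixpoint Irel (P : policy) (rho : tyvar -> tm -> tm -> Prop) (t : ty) (v1 v2 : tm) : Prop :=
  match t with
  | TInt => exists n, v1 = Int n /\ v2 = Int n
  | TVar a => rho a v1 v2
  | TProd t1 t2 => exists a1 b1 a2 b2,
      v1 = Pair a1 b1 /\ v2 = Pair a2 b2 /\ Irel P rho t1 a1 a2 /\ Irel P rho t2 b1 b2
  | TArr t1 t2 => forall w1 w2, Irel P rho t1 w1 w2 ->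
      Iev_of P (Irel P rho t2) t2 (App v1 w1) (App v2 w2)
  end.

(* I[tau_f] for closed tau_f does not depend on rho *)
Definition no_tyvar_rel : tyvar -> tm -> tm -> Prop := fun _ _ _ => False.

Definition rhoP (P : policy) (a : tyvar) (v1 v2 : tm) : Prop :=
  ((exists x, in_Vtop P x /\ a = aname_x P x) /\
     typed_closed v1 TInt /\ typed_closed v2 TInt)
  \/
  (exists x f tf, FP P x = Some (f, tf) /\ a = aname_f P f /\
     typed_closed v1 TInt /\ typed_closed v2 TInt /\
     Iev_of P (Irel P no_tyvar_rel tf) tf (App f v1) (App f v2)).

Definition I (P : policy) (t : ty) : tm -> tm -> Prop := Irel P (rhoP P) t.
Definition Iev (P : policy) (t : ty) : tm -> tm -> Prop := Iev_of P (I P t) t.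

Definition IP (P : policy) (g1 g2 : tsubst) : Prop :=
  respects g1 (ctx_tsubst (deltaP P) (GammaP P)) /\
  respects g2 (ctx_tsubst (deltaP P) (GammaP P)) /\
  (forall x f tf, FP P x = Some (f, tf) ->
     g1 (xname P f) = Some f /\ g2 (xname P f) = Some f) /\
  (forall x, In x (VP P) -> forall t, GammaP P x t ->
     exists v1 v2, g1 x = Some v1 /\ g2 x = Some v2 /\ I P t v1 v2).

Definition TRNI (P : policy) (t : ty) (e : tm) : Prop :=
  typable empty_tctx (GammaC P) e /\
  wf_ty (DeltaP P) t /\
  (forall g1 g2, IP P g1 g2 -> Iev P t (msubst g1 e) (msubst g2 e)).

(* Since e carries no type variables, every lambda in e binds a variable of
   closed type.  At a closed type, I[tau] does not depend on the
   interpretation of type variables and relates only well-typed terms that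
   evaluate to related values, which makes I closed under every typing rule
   (the fundamental lemma).  The free variables of e are covered by I[P]: the
   confidential inputs directly, and each x_f, bound to f on both sides,
   because f is related to itself at alpha_f -> tau_f by the very definition
   of I[alpha_f]. *)

From Stdlib Require Import ZArith List Arith.

Local Hint Constructors value step steps : core.

Lemma ty_subst_closed d t : closed_ty t -> ty_subst d t = t.
Proof.
  unfold closed_ty; induction t; simpl; intros Ht; try contradiction; try reflexivity;
    destruct Ht; f_equal; auto.
Qed.

Lemma closed_ty_wf D t : closed_ty t -> wf_ty D t.
Proof. unfold closed_ty, empty_tctx; induction t; simpl; tauto. Qed.

Lemma wf_ty_mono D D' t : (forall a, D a -> D' a) -> wf_ty D t -> wf_ty D' t.
Proof. induction t; simpl; intuition. Qed.

Lemma closed_ty_of_int_invariant t : ty_subst (fun _ => TInt) t = t -> closed_ty t.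
Proof.
  unfold closed_ty; induction t; simpl; intros Ht; try discriminate; auto;
    injection Ht; auto.
Qed.

Fixpoint no_tyvars (e : tm) : Prop :=
  match e with
  | Var _ | Int _ => True
  | Pair e1 e2 | App e1 e2 | Op _ e1 e2 => no_tyvars e1 /\ no_tyvars e2
  | Fst e1 | Snd e1 => no_tyvars e1
  | Lam _ t b => closed_ty t /\ no_tyvars b
  end.

Lemma no_tyvars_of_tsubst_invariant e :
  (forall d, tm_tsubst d e = e) -> no_tyvars e.
Proof.
  intros He; specialize (He (fun _ => TInt)); induction e; simpl in *;
    try injection He; auto using closed_ty_of_int_invariant.
Qed.

Lemma has_type_weaken D G e t : has_type D G e t ->
  forall D' G', (forall a, D a -> D' a) -> (forall x s, G x s -> G' x s) ->
  has_type D' G' e t.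
Proof.
  induction 1; intros D' G' HD HG; econstructor; eauto using wf_ty_mono.
  apply IHhas_type; auto.
  unfold ext; intros y s [Hy | [Hy Hs]]; auto.
Qed.

Lemma typed_closed_weaken D G e t : typed_closed e t -> has_type D G e t.
Proof. intros He; eapply has_type_weaken; [exact He | intros a [] | intros x s []]. Qed.

Lemma subst_not_free D G e t x v : has_type D G e t ->
  (forall s, ~ G x s) -> subst x v e = e.
Proof.
  intros He; revert x; induction He; intros y Hy; simpl; try (f_equal; eauto; fail).
  - destruct (Nat.eqb_spec y x); subst; [exfalso; eapply Hy; eauto | reflexivity].
  - destruct (Nat.eqb_spec y x); [reflexivity |].
    f_equal; apply IHHe; unfold ext; intros s [[? ?] | [? Hs]]; [congruence | eapply Hy; eauto].
Qed.

Lemma subst_typed_closed e t x v : typed_closed e t -> subst x v e = e.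
Proof. intros He; eapply subst_not_free; [exact He | intros s []]. Qed.

Definition ctx_functional (G : ctx) : Prop := forall x s s', G x s -> G x s' -> s = s'.

Lemma has_type_unique D G e t : has_type D G e t ->
  forall D' t', has_type D' G e t' -> ctx_functional G -> t = t'.
Proof.
  induction 1; intros D' t' He' HG; inversion He'; subst; auto.
  - eapply HG; eauto.
  - f_equal; eauto.
  - assert (TProd t1 t2 = TProd t' t3) by eauto; congruence.
  - assert (TProd t1 t2 = TProd t0 t') by eauto; congruence.
  - f_equal; eapply IHhas_type; eauto.
    unfold ext, ctx_functional; intros y s s' [[? ?] | [? ?]] [[? ?] | [? ?]];
      subst; try congruence; eapply HG; eauto.
  - assert (TArr t1 t2 = TArr t0 t') by eauto; congruence.
Qed.

Lemma typed_closed_unique e t t' : typed_closed e t -> typed_closed e t' -> t = t'.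
Proof. intros He He'; eapply has_type_unique; eauto; intros x s s' []. Qed.

Lemma subst_preserves_typing D G' e t : has_type D G' e t ->
  forall G x s v, (forall y r, G' y r -> ext G x s y r) -> typed_closed v s ->
  has_type D G (subst x v e) t.
Proof.
  induction 1; intros G0 y s v HG Hv; simpl; try (econstructor; eauto; fail).
  - destruct (HG _ _ H) as [[-> ->] | [Hx HG0]].
    + rewrite Nat.eqb_refl; apply typed_closed_weaken; exact Hv.
    + destruct (Nat.eqb_spec y x); [congruence | constructor; exact HG0].
  - destruct (Nat.eqb_spec y x) as [-> | Hyx]; constructor; auto.
    + eapply has_type_weaken; eauto.
      unfold ext; intros z r [Hz | [Hzx Hz]]; auto.
      destruct (HG _ _ Hz) as [[? ?] | [? ?]]; [congruence | auto].
    + eapply IHhas_type; eauto.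
      unfold ext; intros z r [[-> ->] | [Hzx Hz]]; [right; auto |].
      destruct (HG _ _ Hz) as [[-> ->] | [? ?]]; auto.
Qed.

Lemma preservation e e' t : step e e' -> typed_closed e t -> typed_closed e' t.
Proof.
  unfold typed_closed; intros Hs; revert t.
  induction Hs; intros t0 Ht; inversion Ht; subst; try (econstructor; eauto; fail).
  all: match goal with H : has_type _ _ (_ _ _) _ |- _ => inversion H; subst end; auto.
  eapply subst_preserves_typing; eauto.
Qed.

Lemma steps_preservation e e' t : steps e e' -> typed_closed e t -> typed_closed e' t.
Proof. induction 1; eauto using preservation. Qed.

Lemma has_type_wf D G e t : has_type D G e t ->
  (forall x s, G x s -> wf_ty D s) -> wf_ty D t.
Proof.
  induction 1; intros HG; simpl; eauto.
  - apply IHhas_type; auto.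
  - apply IHhas_type; auto.
  - split; auto; apply IHhas_type.
    unfold ext; intros y s [[-> ->] | [_ Hy]]; eauto.
  - apply IHhas_type1; auto.
Qed.

Lemma value_irreducible v e : value v -> step v e -> False.
Proof.
  intros Hv; revert e; induction Hv; intros e' Hs; inversion Hs; subst; eauto.
Qed.

Lemma step_deterministic e e1 e2 : step e e1 -> step e e2 -> e1 = e2.
Proof.
  intros Hs1; revert e2; induction Hs1; intros e'' Hs2; inversion Hs2; subst;
    try reflexivity; try (f_equal; eauto; fail);
    exfalso; eauto using value_irreducible.
Qed.

Lemma steps_trans a b c : steps a b -> steps b c -> steps a c.
Proof. induction 1; eauto. Qed.

Lemma steps_congr (F : tm -> tm) a b :
  (forall e e', step e e' -> step (F e) (F e')) -> steps a b -> steps (F a) (F b).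
Proof. intros HF; induction 1; eauto. Qed.

Lemma steps_pair a a' b b' :
  steps a a' -> value a' -> steps b b' -> steps (Pair a b) (Pair a' b').
Proof.
  intros Ha Va Hb; apply steps_trans with (Pair a' b).
  - apply (steps_congr (fun x => Pair x b)); auto.
  - apply (steps_congr (Pair a')); auto.
Qed.

Lemma steps_app a a' b b' :
  steps a a' -> value a' -> steps b b' -> steps (App a b) (App a' b').
Proof.
  intros Ha Va Hb; apply steps_trans with (App a' b).
  - apply (steps_congr (fun x => App x b)); auto.
  - apply (steps_congr (App a')); auto.
Qed.

Lemma steps_op o a a' b b' :
  steps a a' -> value a' -> steps b b' -> steps (Op o a b) (Op o a' b').
Proof.
  intros Ha Va Hb; apply steps_trans with (Op o a' b).
  - apply (steps_congr (fun x => Op o x b)); auto.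
  - apply (steps_congr (Op o a')); auto.
Qed.

Lemma steps_beta x t b w u r :
  steps w u -> value u -> steps (subst x u b) r -> steps (App (Lam x t b) w) r.
Proof.
  intros Hw Vu Hr; apply steps_trans with (App (Lam x t b) u); [apply steps_app |]; eauto.
Qed.

Lemma steps_fst a v1 v2 :
  steps a (Pair v1 v2) -> value v1 -> value v2 -> steps (Fst a) v1.
Proof.
  intros Ha V1 V2; apply steps_trans with (Fst (Pair v1 v2)).
  - apply (steps_congr Fst); auto.
  - eauto.
Qed.

Lemma steps_snd a v1 v2 :
  steps a (Pair v1 v2) -> value v1 -> value v2 -> steps (Snd a) v2.
Proof.
  intros Ha V1 V2; apply steps_trans with (Snd (Pair v1 v2)).
  - apply (steps_congr Snd); auto.
  - eauto.
Qed.

Lemma steps_to_value_confluent e e' v :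
  steps e v -> value v -> steps e e' -> steps e' v.
Proof.
  intros Hv Vv He'; revert v Hv Vv; induction He' as [| e1 e2 e3 H12 _ IH];
    intros v Hv Vv; auto.
  inversion Hv as [| ? e2' ? H12' Hv']; subst.
  - exfalso; eapply value_irreducible; eauto.
  - apply IH; [rewrite (step_deterministic _ _ _ H12 H12'); exact Hv' | exact Vv].
Qed.

Lemma app_evaluates_fun a b r :
  steps (App a b) r -> value r -> exists a', value a' /\ steps a a'.
Proof.
  remember (App a b) as e eqn:He; intros Hr Vr; revert a b He.
  induction Hr as [| e1 e2 e3 H12 H23 IH]; intros a b ->; [inversion Vr |].
  inversion H12; subst.
  - exists (Lam x t e); eauto.
  - destruct (IH Vr _ _ eq_refl) as [a' [Va' Ha']]; eauto.
  - eauto.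
Qed.

Lemma typed_closed_app_fun w c t1 t2 :
  typed_closed (App w c) t2 -> typed_closed c t1 -> typed_closed w (TArr t1 t2).
Proof.
  intros Hwc Hc; inversion Hwc as [| | | | | | ? ? ? s ? Hw Hc' |]; subst.
  rewrite (typed_closed_unique _ _ _ Hc Hc'); exact Hw.
Qed.

Definition evals_related (R : tm -> tm -> Prop) (e1 e2 : tm) : Prop :=
  exists v1 v2, value v1 /\ value v2 /\ steps e1 v1 /\ steps e2 v2 /\ R v1 v2.

Lemma evals_related_values (R : tm -> tm -> Prop) v1 v2 :
  value v1 -> value v2 -> R v1 v2 -> evals_related R v1 v2.
Proof. intros; exists v1, v2; repeat split; auto. Qed.

Lemma evals_related_mono (R R' : tm -> tm -> Prop) e1 e2 :
  (forall a b, R a b -> R' a b) -> evals_related R e1 e2 -> evals_related R' e1 e2.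
Proof. intros HR (v1 & v2 & ? & ? & ? & ? & ?); exists v1, v2; auto 6. Qed.

Lemma Irel_closed_indep P t : closed_ty t ->
  forall rho rho' v1 v2, Irel P rho t v1 v2 -> Irel P rho' t v1 v2.
Proof.
  unfold closed_ty; induction t as [| a | t1 IH1 t2 IH2 | t1 IH1 t2 IH2];
    simpl; intros Hc rho rho' v1 v2 Hv; try contradiction; auto.
  - destruct Hc; destruct Hv as (a1 & b1 & a2 & b2 & ? & ? & ? & ?).
    exists a1, b1, a2, b2; eauto 6.
  - destruct Hc as [Hc1 Hc2]; intros w1 w2 Hw.
    destruct (Hv w1 w2 (IH1 Hc1 _ _ _ _ Hw)) as (T1 & T2 & Hev).
    repeat split; auto; eapply evals_related_mono; [| exact Hev]; eauto.
Qed.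

Section LogicalRelation.

Variables (P : policy) (rho : tyvar -> tm -> tm -> Prop).

Lemma evals_related_pair t1 t2 a1 a2 b1 b2 :
  evals_related (Irel P rho t1) a1 a2 -> evals_related (Irel P rho t2) b1 b2 ->
  evals_related (Irel P rho (TProd t1 t2)) (Pair a1 b1) (Pair a2 b2).
Proof.
  intros (u1 & u2 & U1 & U2 & Su1 & Su2 & Ru) (w1 & w2 & W1 & W2 & Sw1 & Sw2 & Rw).
  exists (Pair u1 w1), (Pair u2 w2); repeat split; auto using steps_pair.
  exists u1, w1, u2, w2; auto.
Qed.

Lemma evals_related_fst t1 t2 p1 p2 :
  evals_related (Irel P rho (TProd t1 t2)) p1 p2 ->
  evals_related (Irel P rho t1) (Fst p1) (Fst p2).
Proof.
  intros (q1 & q2 & Q1 & Q2 & S1 & S2 & (a1 & b1 & a2 & b2 & -> & -> & Ra & _)).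
  inversion Q1; inversion Q2; subst.
  exists a1, a2; repeat split; eauto using steps_fst.
Qed.

Lemma evals_related_snd t1 t2 p1 p2 :
  evals_related (Irel P rho (TProd t1 t2)) p1 p2 ->
  evals_related (Irel P rho t2) (Snd p1) (Snd p2).
Proof.
  intros (q1 & q2 & Q1 & Q2 & S1 & S2 & (a1 & b1 & a2 & b2 & -> & -> & _ & Rb)).
  inversion Q1; inversion Q2; subst.
  exists b1, b2; repeat split; eauto using steps_snd.
Qed.

Lemma evals_related_app t1 t2 f1 f2 a1 a2 :
  evals_related (Irel P rho (TArr t1 t2)) f1 f2 -> evals_related (Irel P rho t1) a1 a2 ->
  evals_related (Irel P rho t2) (App f1 a1) (App f2 a2).
Proof.
  intros (g1 & g2 & G1 & G2 & Sg1 & Sg2 & Rg) (u1 & u2 & U1 & U2 & Su1 & Su2 & Ru).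
  destruct (Rg _ _ Ru) as (_ & _ & r1 & r2 & R1 & R2 & Sr1 & Sr2 & Rr).
  exists r1, r2; repeat split; eauto using steps_trans, steps_app.
Qed.

Lemma evals_related_op o a1 a2 b1 b2 :
  evals_related (Irel P rho TInt) a1 a2 -> evals_related (Irel P rho TInt) b1 b2 ->
  evals_related (Irel P rho TInt) (Op o a1 b1) (Op o a2 b2).
Proof.
  intros (u1 & u2 & _ & _ & Su1 & Su2 & [n [-> ->]]) (w1 & w2 & _ & _ & Sw1 & Sw2 & [m [-> ->]]).
  exists (Int (o n m)), (Int (o n m)); repeat split; eauto using steps_trans, steps_op.
  exists (o n m); auto.
Qed.

(* I[alpha_x] relates arbitrary closed terms of type int, not only values, so
   related arguments have to be evaluated before they can be substituted. *)
Definition Irel_evaluates (t : ty) : Prop :=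
  forall w1 w2, Irel P rho t w1 w2 ->
    typed_closed w1 t /\ typed_closed w2 t /\ evals_related (Irel P rho t) w1 w2.

Definition Irel_inhabited (t : ty) : Prop :=
  exists c1 c2, value c1 /\ value c2 /\ typed_closed c1 t /\ typed_closed c2 t /\
    Irel P rho t c1 c2.

Lemma Irel_lam x t1 t2 b1 b2 :
  Irel_evaluates t1 ->
  typed_closed (Lam x t1 b1) (TArr t1 (ty_subst (deltaP P) t2)) ->
  typed_closed (Lam x t1 b2) (TArr t1 (ty_subst (deltaP P) t2)) ->
  (forall w1 w2, value w1 -> value w2 -> typed_closed w1 t1 -> typed_closed w2 t1 ->
     Irel P rho t1 w1 w2 -> evals_related (Irel P rho t2) (subst x w1 b1) (subst x w2 b2)) ->
  Irel P rho (TArr t1 t2) (Lam x t1 b1) (Lam x t1 b2).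
Proof.
  intros Ht1 L1 L2 Hbody w1 w2 Hw.
  destruct (Ht1 _ _ Hw) as (T1 & T2 & u1 & u2 & U1 & U2 & S1 & S2 & Ru).
  destruct (Hbody u1 u2) as (r1 & r2 & R1 & R2 & Sr1 & Sr2 & Rr);
    eauto using steps_preservation.
  repeat split; try (econstructor; eauto; fail).
  exists r1, r2; repeat split; eauto using steps_beta.
Qed.

Lemma Irel_prod_evaluates t1 t2 :
  Irel_evaluates t1 -> Irel_evaluates t2 -> Irel_evaluates (TProd t1 t2).
Proof.
  intros H1 H2 w1 w2 (a1 & b1 & a2 & b2 & -> & -> & Ra & Rb).
  destruct (H1 _ _ Ra) as (Ta1 & Ta2 & Ea); destruct (H2 _ _ Rb) as (Tb1 & Tb2 & Eb).
  repeat split; try constructor; auto using evals_related_pair.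
Qed.

Lemma Irel_prod_inhabited t1 t2 :
  Irel_inhabited t1 -> Irel_inhabited t2 -> Irel_inhabited (TProd t1 t2).
Proof.
  intros (c1 & c2 & ? & ? & ? & ? & ?) (d1 & d2 & ? & ? & ? & ? & ?).
  exists (Pair c1 d1), (Pair c2 d2); repeat split; try constructor; auto.
  exists c1, d1, c2, d2; auto.
Qed.

(* I[t1 -> t2] only speaks about applications; an inhabitant of I[t1] is what
   gives access to the type of the functions themselves. *)
Lemma Irel_arrow_evaluates t1 t2 :
  closed_ty t2 -> Irel_inhabited t1 -> Irel_evaluates (TArr t1 t2).
Proof.
  intros Hc2 (c1 & c2 & _ & _ & Tc1 & Tc2 & Rc) w1 w2 Hw.
  destruct (Hw _ _ Rc) as (A1 & A2 & r1 & r2 & R1 & R2 & S1 & S2 & _).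
  rewrite ty_subst_closed in A1, A2 by exact Hc2.
  destruct (app_evaluates_fun _ _ _ S1 R1) as (w1' & W1 & Sw1).
  destruct (app_evaluates_fun _ _ _ S2 R2) as (w2' & W2 & Sw2).
  repeat split; eauto using typed_closed_app_fun.
  exists w1', w2'; do 4 (split; [assumption |]).
  intros u1 u2 Hu.
  destruct (Hw _ _ Hu) as (B1 & B2 & q1 & q2 & Q1 & Q2 & Sq1 & Sq2 & Rq).
  assert (Su1 : steps (App w1 u1) (App w1' u1)) by auto using steps_app.
  assert (Su2 : steps (App w2 u2) (App w2' u2)) by auto using steps_app.
  repeat split; eauto using steps_preservation.
  exists q1, q2; repeat split; eauto using steps_to_value_confluent.
Qed.

Lemma Irel_arrow_inhabited t1 t2 :
  closed_ty t1 -> Irel_evaluates t1 -> closed_ty t2 -> Irel_inhabited t2 ->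
  Irel_inhabited (TArr t1 t2).
Proof.
  intros Hc1 Ht1 Hc2 (d1 & d2 & D1 & D2 & T1 & T2 & Rd).
  assert (L : forall d, typed_closed d t2 -> typed_closed (Lam 0 t1 d) (TArr t1 t2)).
  { intros d Hd; constructor; [exact Hc1 | apply typed_closed_weaken; exact Hd]. }
  exists (Lam 0 t1 d1), (Lam 0 t1 d2); do 4 (split; auto).
  apply Irel_lam; try rewrite ty_subst_closed; auto.
  intros; rewrite !(subst_typed_closed _ t2) by assumption.
  apply evals_related_values; auto.
Qed.

Lemma Irel_closed_ty t : closed_ty t -> Irel_evaluates t /\ Irel_inhabited t.
Proof.
  induction t as [| a | t1 IH1 t2 IH2 | t1 IH1 t2 IH2]; intros Hc.
  - split.
    + intros w1 w2 [n [-> ->]]; repeat split; try constructor.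
      apply evals_related_values; try constructor; exists n; auto.
    + exists (Int 0), (Int 0); repeat split; try constructor; exists 0%Z; auto.
  - destruct Hc.
  - destruct Hc as [Hc1 Hc2], (IH1 Hc1), (IH2 Hc2).
    split; auto using Irel_prod_evaluates, Irel_prod_inhabited.
  - destruct Hc as [Hc1 Hc2], (IH1 Hc1), (IH2 Hc2).
    split; auto using Irel_arrow_evaluates, Irel_arrow_inhabited.
Qed.

End LogicalRelation.

Definition tsubst_remove (g : tsubst) (y : var) : tsubst :=
  fun z => if Nat.eqb z y then None else g z.

Definition tsubst_update (g : tsubst) (y : var) (w : tm) : tsubst :=
  fun z => if Nat.eqb z y then Some w else g z.

Definition closed_range (g : tsubst) : Prop :=
  forall z v, g z = Some v -> forall y w, subst y w v = v.

Lemma closed_range_update g y w t :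
  closed_range g -> typed_closed w t -> closed_range (tsubst_update g y w).
Proof.
  unfold closed_range, tsubst_update; intros Hg Hw z v.
  destruct (Nat.eqb z y); [intros [= <-]; eauto using subst_typed_closed | eauto].
Qed.

Lemma msubst_ext e g g' : (forall z, g z = g' z) -> msubst g e = msubst g' e.
Proof.
  revert g g'; induction e; intros g g' H; simpl; f_equal; auto.
  - rewrite H; reflexivity.
  - apply IHe; intros z; destruct (Nat.eqb z v); auto.
Qed.

Lemma msubst_empty e : msubst (fun _ => None) e = e.
Proof.
  induction e; simpl; f_equal; auto.
  rewrite <- IHe at 2; apply msubst_ext; intros z; destruct (Nat.eqb z v); auto.
Qed.

Lemma msubst_remove_subst b g y w : closed_range g ->
  subst y w (msubst (tsubst_remove g y) b) = msubst (tsubst_update g y w) b.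
Proof.
  revert g; induction b; intros g Hg; simpl; try (f_equal; auto; fail).
  - unfold tsubst_remove, tsubst_update.
    destruct (Nat.eqb_spec v y) as [-> | Hvy]; simpl.
    + rewrite Nat.eqb_refl; reflexivity.
    + destruct (g v) eqn:Ev; [eapply Hg; eauto |].
      simpl; destruct (Nat.eqb_spec y v); congruence.
  - destruct (Nat.eqb_spec y v) as [-> | Hyv]; f_equal.
    + apply msubst_ext; intros z; unfold tsubst_remove, tsubst_update.
      destruct (Nat.eqb z v); reflexivity.
    + change (fun z => if Nat.eqb z v then None else tsubst_remove g y z)
        with (tsubst_remove (tsubst_remove g y) v).
      rewrite (msubst_ext b _ (tsubst_remove (tsubst_remove g v) y)), IHb.
      * apply msubst_ext; intros z; unfold tsubst_remove, tsubst_update.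
        destruct (Nat.eqb_spec z v), (Nat.eqb_spec z y); congruence.
      * intros z u; unfold tsubst_remove; destruct (Nat.eqb z v); [discriminate | eauto].
      * intros z; unfold tsubst_remove; destruct (Nat.eqb z v), (Nat.eqb z y); auto.
Qed.

Lemma msubst_typing D G e t : has_type D G e t -> no_tyvars e ->
  forall d g G',
  (forall x s, G x s ->
     (exists v, g x = Some v /\ typed_closed v (ty_subst d s)) \/
     (g x = None /\ G' x (ty_subst d s))) ->
  has_type empty_tctx G' (msubst g e) (ty_subst d t).
Proof.
  induction 1; simpl; intros He d g G' Hg.
  - constructor.
  - destruct (Hg _ _ H) as [[v [-> Hv]] | [-> HG']].
    + apply typed_closed_weaken; exact Hv.
    + constructor; exact HG'.
  - destruct He; constructor; auto.
  - eapply T_Fst; exact (IHhas_type He d g G' Hg).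
  - eapply T_Snd; exact (IHhas_type He d g G' Hg).
  - destruct He as [Hc He].
    rewrite (ty_subst_closed _ _ Hc); constructor; [exact Hc |].
    apply IHhas_type; auto.
    unfold ext; intros z s [[-> ->] | [Hzx Hz]].
    + right; rewrite Nat.eqb_refl, (ty_subst_closed _ _ Hc); auto.
    + destruct (Nat.eqb_spec z x); [congruence |].
      destruct (Hg _ _ Hz) as [Hv | [Hv HG']]; auto.
  - destruct He as [He1 He2].
    eapply T_App; [exact (IHhas_type1 He1 d g G' Hg) | auto].
  - destruct He as [He1 He2]; constructor;
      [exact (IHhas_type1 He1 d g G' Hg) | exact (IHhas_type2 He2 d g G' Hg)].
Qed.

Definition related_env (P : policy) (G : ctx) (g1 g2 : tsubst) : Prop :=
  closed_range g1 /\ closed_range g2 /\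
  forall x t, G x t -> exists v1 v2,
    g1 x = Some v1 /\ g2 x = Some v2 /\ value v1 /\ value v2 /\
    typed_closed v1 (ty_subst (deltaP P) t) /\ typed_closed v2 (ty_subst (deltaP P) t) /\
    I P t v1 v2.

Lemma related_env_msubst_typed P D G g1 g2 e t :
  related_env P G g1 g2 -> has_type D G e t -> no_tyvars e ->
  typed_closed (msubst g1 e) (ty_subst (deltaP P) t) /\
  typed_closed (msubst g2 e) (ty_subst (deltaP P) t).
Proof.
  intros (_ & _ & Hg) Ht He; split; eapply msubst_typing; eauto;
    intros x s Hx; left; destruct (Hg x s Hx) as (v1 & v2 & ? & ? & _ & _ & ? & ? & _); eauto.
Qed.

Lemma related_env_ext P G g1 g2 x t w1 w2 :
  related_env P G g1 g2 -> closed_ty t ->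
  value w1 -> value w2 -> typed_closed w1 t -> typed_closed w2 t -> I P t w1 w2 ->
  related_env P (ext G x t) (tsubst_update g1 x w1) (tsubst_update g2 x w2).
Proof.
  intros (Hc1 & Hc2 & Hg) Ht W1 W2 T1 T2 Hw.
  split; [| split]; eauto using closed_range_update.
  unfold ext, tsubst_update; intros y s [[-> ->] | [Hyx Hy]].
  - rewrite Nat.eqb_refl, ty_subst_closed by exact Ht; eauto 10.
  - destruct (Nat.eqb_spec y x); [congruence | auto].
Qed.

Theorem fundamental P D G e t : has_type D G e t -> no_tyvars e ->
  forall g1 g2, related_env P G g1 g2 ->
  evals_related (I P t) (msubst g1 e) (msubst g2 e).
Proof.
  unfold I; intros Ht; induction Ht; intros He g1 g2 Hg; cbn [msubst no_tyvars] in *.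
  - apply evals_related_values; auto; exists n; auto.
  - destruct Hg as (_ & _ & Hg).
    destruct (Hg _ _ H) as (v1 & v2 & -> & -> & V1 & V2 & _ & _ & Hv).
    apply evals_related_values; auto.
  - destruct He; apply evals_related_pair; auto.
  - eapply evals_related_fst; eauto.
  - eapply evals_related_snd; eauto.
  - destruct He as [Hc He].
    destruct (related_env_msubst_typed _ _ _ _ _ _ _ Hg (T_Lam _ _ _ _ _ _ H Ht))
      as [L1 L2]; [simpl; auto |].
    simpl in L1, L2; rewrite ty_subst_closed in L1, L2 by exact Hc.
    apply evals_related_values; auto.
    apply Irel_lam; auto.
    + apply Irel_closed_ty; exact Hc.
    + intros w1 w2 W1 W2 T1 T2 Hw.
      pose proof Hg as (Hc1 & Hc2 & _).
      fold (tsubst_remove g1 x) (tsubst_remove g2 x).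
      rewrite !msubst_remove_subst by assumption.
      apply IHHt; auto using related_env_ext.
  - destruct He; eapply evals_related_app; eauto.
  - destruct He; apply evals_related_op; auto.
Qed.

Lemma inDeltaP_aname_x P x : in_Vtop P x -> inDeltaP P (aname_x P x) = true.
Proof.
  intros [Hx HF]; apply existsb_exists; exists x; rewrite HF; auto using Nat.eqb_refl.
Qed.

Lemma inDeltaP_aname_f P x f tf :
  In x (VP P) -> FP P x = Some (f, tf) -> inDeltaP P (aname_f P f) = true.
Proof.
  intros Hx HF; apply existsb_exists; exists x; rewrite HF; auto using Nat.eqb_refl.
Qed.

Lemma GammaP_wf P x s : wf_policy P -> GammaP P x s -> wf_ty (DeltaP P) s.
Proof.
  intros (Hdom & Hf & _) Hx; unfold DeltaP; destruct Hx as [x Hx | x f tf Hx | x f tf Hx];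
    simpl; eauto using inDeltaP_aname_x, inDeltaP_aname_f.
  destruct (Hf _ _ _ Hx) as (_ & _ & Hc); eauto using inDeltaP_aname_f, closed_ty_wf.
Qed.

Lemma GammaP_to_GammaC P x s :
  wf_policy P -> GammaP P x s -> GammaC P x (ty_subst (deltaP P) s).
Proof.
  intros (Hdom & Hf & _) Hx; unfold deltaP;
    destruct Hx as [x Hx | x f tf Hx | x f tf Hx]; simpl.
  - rewrite inDeltaP_aname_x by exact Hx; apply GC_top; exact Hx.
  - rewrite (inDeltaP_aname_f P x f tf) by eauto; eapply GC_decl; eauto.
  - rewrite (inDeltaP_aname_f P x f tf) by eauto.
    destruct (Hf _ _ _ Hx) as (_ & _ & Hc); rewrite ty_subst_closed by exact Hc.
    eapply GC_declf; eauto.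
Qed.

(* By distinctness of the alpha names, a pair related at alpha_f comes from the
   alpha_f-branch of rhoP, which is literally I[tau_f]^ev of the applications
   of f. *)
Lemma I_declassifier P x f tf : wf_policy P -> FP P x = Some (f, tf) ->
  I P (TArr (TVar (aname_f P f)) tf) f f.
Proof.
  intros (_ & Hf & _ & _ & _ & Hinj & Hdisj) Hx w1 w2
    [[(x' & Hx' & Ha) _] | (x' & f' & tf' & Hx' & Ha & _ & _ & Hev)].
  - exfalso; eapply Hdisj; eauto.
  - assert (f' = f) as -> by (symmetry; eapply Hinj; eauto).
    destruct (Hf _ _ _ Hx) as (_ & Tf & Hc), (Hf _ _ _ Hx') as (_ & Tf' & _).
    assert (tf' = tf) as -> by (injection (typed_closed_unique _ _ _ Tf' Tf); auto).
    destruct Hev as (T1 & T2 & Hev); repeat split; auto.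
    eapply evals_related_mono; [| exact Hev]; eauto using Irel_closed_indep.
Qed.

Lemma respects_closed_range g G : respects g G -> closed_range g.
Proof.
  intros [Hdom Hg] z v Hz y w.
  destruct (proj1 (Hdom z)) as [s Hs]; [congruence |].
  destruct (Hg z v s Hz Hs); eauto using subst_typed_closed.
Qed.

Lemma IP_related_env P g1 g2 :
  wf_policy P -> IP P g1 g2 -> related_env P (GammaP P) g1 g2.
Proof.
  intros Hwf (R1 & R2 & Hxf & Hrel).
  assert (HI : forall x s, GammaP P x s ->
            exists v1 v2, g1 x = Some v1 /\ g2 x = Some v2 /\ I P s v1 v2).
  { pose proof Hwf as (Hdom & _).
    intros x s Hx; destruct Hx as [x Hx | x f tf Hx | x f tf Hx].
    - apply Hrel; [apply Hx | apply GP_top; exact Hx].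
    - apply Hrel; [eapply Hdom; eauto | eapply GP_decl; eauto].
    - destruct (Hxf _ _ _ Hx) as [-> ->].
      exists f, f; split; [| split]; eauto using I_declassifier. }
  split; [| split]; eauto using respects_closed_range.
  intros x s Hx; destruct (HI x s Hx) as (v1 & v2 & E1 & E2 & Hv).
  destruct (proj2 R1 x v1 (ty_subst (deltaP P) s) E1) as [V1 T1]; [exists s; auto |].
  destruct (proj2 R2 x v2 (ty_subst (deltaP P) s) E2) as [V2 T2]; [exists s; auto |].
  exists v1, v2; auto 10.
Qed.

Theorem theorem2 (P : policy) (e : tm) (t : ty) :
  wf_policy P ->
  (forall d : tyvar -> ty, tm_tsubst d e = e) ->
  has_type (DeltaP P) (GammaP P) e t ->
  TRNI P t e.
Proof.
  intros Hwf Hinv Ht.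
  assert (He : no_tyvars e) by (apply no_tyvars_of_tsubst_invariant; exact Hinv).
  split; [| split].
  - exists (ty_subst (deltaP P) t); rewrite <- (msubst_empty e).
    apply (msubst_typing _ _ _ _ Ht He); intros x s Hx.
    right; split; [reflexivity | apply GammaP_to_GammaC; auto].
  - apply (has_type_wf _ _ _ _ Ht); intros x s; apply GammaP_wf; exact Hwf.
  - intros g1 g2 Hg; apply IP_related_env in Hg; [| exact Hwf].
    destruct (related_env_msubst_typed _ _ _ _ _ _ _ Hg Ht He) as [T1 T2].
    split; [| split]; auto.
    exact (fundamental _ _ _ _ _ Ht He _ _ Hg).
Qed.
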